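(* Every natural-number-valued sequence $F$ in the family $\mathcal{T}_\lambda(\alpha,\beta)$ (restricted to its terms $n_F$, $n\ge1$) belongs to $\mathcal{T}_\lambda$; consequently every such $F$ is a cobweb tiling sequence. Moreover the inclusion $\mathcal{T}_\lambda(\alpha,\beta)\subset\mathcal{T}_\lambda$ is proper: the Fibonacci sequence belongs to $\mathcal{T}_\lambda$ but not to $\mathcal{T}_\lambda(\alpha,\beta)$.
   Context: Throughout, $\mathbb{N}=\{1,2,\dots\}$. The family $\mathcal{T}_\lambda$ consists of sequences $F=(n_F)_{n\ge1}$ of natural numbers for which there exist functions $\lambda_K,\lambda_M:\mathbb{N}\times\mathbb{N}\to\mathbb{N}\cup\{0\}$ such that $(k+m)_F=\lambda_K(k,m)k_F+\lambda_M(k,m)m_F$ for all $k,m\in\mathbb{N}$. The family $\mathcal{T}_\lambda(\alpha,\beta)$ consists of sequences with $n_F=[x^n]\frac{1_F\,x}{(1-\alpha x)(1-\beta x)}$, for some $\alpha,\beta\in\mathbb{N}\cup\{0\}$ and $1_F\in\mathbb{N}$. The Fibonacci sequence is $F_0=0$, $F_1=F_2=1$, $F_{n+1}=F_n+F_{n-1}$. For a sequence $F$ of natural numbers, write $[s_F]=\{1,\dots,s_F\}$, $n_F!=n_F\cdots1_F$ with $0_F!=1$, and $\binom{n}{m}_F=\frac{n_F!}{m_F!(n-m)_F!}$. $F$ is admissible if all $\binom{n}{m}_F\in\mathbb{N}\cup\{0\}$. For $1\le m\le n$ and $k=n-m+1$, the $F$-box is $V_{m,n}=[k_F]\times\cdots\times[n_F]$.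 A sub-box of the form $\sigma V_m$ ($\sigma$ a permutation of $\{1,\dots,m\}$) is $A_1\times\cdots\times A_m$ with $A_s\subseteq[(k+s-1)_F]$ and $|A_s|=(\sigma(s))_F$. A tiling of $V_{m,n}$ is a family of pairwise disjoint such sub-boxes ($\sigma$ may vary) with union $V_{m,n}$. $F$ is a cobweb tiling sequence if it is admissible and every $V_{m,n}$, $1\le m\le n$, has a tiling. *)

From mathcomp Require Import all_boot fingroup perm.
Set Implicit Arguments. Unset Strict Implicit. Unset Printing Implicit Defensive.

(* A sequence F = (n_F)_{n>=1} is modelled as F : nat -> nat; the value F 0 is
   irrelevant and never used. *)

(* Positivity: the terms n_F, n >= 1, are natural numbers (N = {1,2,...}). *)
Definition nat_valued (F : nat -> nat) : Prop := forall n, 0 < n -> 0 < F n.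

Definition in_Tlambda (F : nat -> nat) : Prop :=
  nat_valued F /\
  exists (lK lM : nat -> nat -> nat),
    forall k m, 0 < k -> 0 < m -> F (k + m) = lK k m * F k + lM k m * F m.

(* [x^n] (c x / ((1 - a x)(1 - b x))) = c * sum_{i+j = n-1} a^i b^j, n >= 1. *)
Definition Tab_coef (a b c n : nat) : nat :=
  c * \sum_(i < n) a ^ i * b ^ (n.-1 - i).

(* The family T_lambda(alpha,beta) (union over alpha, beta in N u {0}, 1_F in N). *)
Definition in_Tab (F : nat -> nat) : Prop :=
  exists a b c : nat, 0 < c /\ forall n, 0 < n -> F n = Tab_coef a b c n.

Fixpoint fib (n : nat) : nat :=
  match n with
  | 0 => 0
  | 1 => 1
  | (m.+1 as p).+1 => fib p + fib m
  end.

Definition Ffact (F : nat -> nat) (n : nat) : nat := \prod_(1 <= i < n.+1) F i.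

(* Admissible: every F-binomial (n choose m)_F, 0 <= m <= n, is a natural
   number (or 0), i.e. m_F! (n-m)_F! divides n_F!. *)
Definition admissible (F : nat -> nat) : Prop :=
  forall n m, m <= n -> Ffact F m * Ffact F (n - m) %| Ffact F n.

(* A candidate box with m coordinates: coordinate s (0-indexed, i.e. s+1 in
   the paper) is given by a list A s of natural numbers. *)
Definition box (m : nat) := {ffun 'I_m -> seq nat}.

Definition in_box m (A : box m) (x : 'I_m -> nat) : Prop :=
  forall s : 'I_m, x s \in A s.

(* x lies in V_{m,n} = [k_F] x ... x [n_F], k = n - m + 1: coordinate s
   (0-indexed) ranges over [(k+s)_F] = {1, ..., (k+s)_F}. *)
Definition in_V (F : nat -> nat) m n (x : 'I_m -> nat) : Prop :=
  forall s : 'I_m, 1 <= x s <= F (n - m + 1 + s).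

(* A is a sub-box of V_{m,n} of the form sigma V_m: A_s is a subset of
   [(k+s-1)_F] with |A_s| = (sigma(s))_F (paper's 1-indexed s). *)
Definition is_subbox (F : nat -> nat) (m n : nat) (A : box m) : Prop :=
  exists sigma : 'S_m, forall s : 'I_m,
    [/\ uniq (A s),
        all (fun a => 1 <= a <= F (n - m + 1 + s)) (A s)
      & size (A s) = F (sigma s).+1].

Arguments is_subbox F m n A : clear implicits.
Arguments in_V F m n x : clear implicits.

Definition has_tiling (F : nat -> nat) m n : Prop :=
  exists T : seq (box m),
    [/\ forall A, A \in T -> is_subbox F m n A,
        forall i j, i < size T -> j < size T -> i != j ->
          forall x, ~ (in_box (nth [ffun => [::]] T i) x /\
                       in_box (nth [ffun => [::]] T j) x)
      & forall x, in_V F m n x <-> exists2 A, A \in T & in_box A x].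

Definition cobweb_tiling (F : nat -> nat) : Prop :=
  admissible F /\ forall m n, 1 <= m -> m <= n -> has_tiling F m n.

From mathcomp Require Import all_boot fingroup perm.
From mathcomp Require Import zify.
Set Implicit Arguments. Unset Strict Implicit. Unset Printing Implicit Defensive.

(** A sequence in T_lambda(alpha, beta) satisfies
    (k + m)_F = beta^m k_F + alpha^k m_F, hence lies in T_lambda.

    For F in T_lambda write n = k + m, so that n_F = lambda_K k_F + lambda_M m_F.
    Since V_{m,n} = V_{m-1,n-1} x [n_F], cutting the last side [n_F] into
    lambda_M segments of length m_F and lambda_K segments of length k_F splits
    V_{m,n} into lambda_M copies of V_{m-1,n-1} x [m_F], tiled by extending every
    tile of V_{m-1,n-1} by a segment, and lambda_K copies of a cyclic rotation of
    V_{m,n-1} = [k_F] x ... x [(n-1)_F], tiled by induction on n.  The same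
    recurrence gives (n choose m)_F = lambda_K (n-1 choose m)_F
    + lambda_M (n-1 choose m-1)_F, so F is admissible.

    Fibonacci satisfies F_{k+m} = F_{m+1} F_k + F_{k-1} F_m, whereas a sequence
    of T_lambda(alpha, beta) with F_1 = F_2 = 1 and F_3 = 2 would need
    1_F = 1, alpha + beta = 1 and alpha^2 + alpha beta + beta^2 = 2. *)

Section All2.
Variables (S T : Type) (r : S -> T -> bool).

Lemma all2_cons x y s t : all2 r (x :: s) (y :: t) = r x y && all2 r s t.
Proof. by []. Qed.

Lemma all2_size s t : all2 r s t -> size s = size t.
Proof. by elim: s t => [|x s IH] [|y t] //= /andP[_ /IH ->]. Qed.

Lemma all2_rcons s t x y : all2 r (rcons s x) (rcons t y) = all2 r s t && r x y.
Proof.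
elim: s t => [|x' s IH] [|y' t] //=; rewrite ?IH ?andbA ?andbT //.
  by case: t => [|? ?] /=; rewrite andbF.
by case: s {IH} => [|? ?] /=; rewrite andbF.
Qed.

Lemma all2_rcons_nil s x : all2 r (rcons s x) [::] = false.
Proof. by case: s. Qed.

Lemma all2_rot1 s t : all2 r (rot 1 s) (rot 1 t) = all2 r s t.
Proof.
case: s t => [|x s] [|y t] //; rewrite ?rot1_cons /= ?all2_rcons 1?andbC //.
  by case: t.
by case: s.
Qed.

Lemma all2_nthP x0 y0 s t :
  reflect (size s = size t /\ forall i, i < size s -> r (nth x0 s i) (nth y0 t i))
          (all2 r s t).
Proof.
elim: s t => [|x s IH] [|y t] /=.
- by constructor.
- by constructor; case.
- by constructor; case.
apply: (iffP andP) => [[rxy /IH [st rst]]|[[st] rst]].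
  by split=> [|[|i] //= /rst]; rewrite ?st.
by split; [exact: (rst 0) | apply/IH; split => // i /(rst i.+1)].
Qed.

End All2.

Definition in_seg (I : nat * nat) : pred nat := fun a => I.1 < a <= I.1 + I.2.

Definition seg (I : nat * nat) : seq nat := iota I.1.+1 I.2.

Lemma mem_seg I a : (a \in seg I) = in_seg I a.
Proof. by rewrite mem_iota addSn. Qed.

Lemma mem_map_addn d (A : seq nat) a :
  (a \in map (addn d) A) = (d <= a) && (a - d \in A).
Proof.
case: leqP => [le_da|lt_ad] /=.
  by rewrite -{1}(subnKC le_da) mem_map //; apply: addnI.
by apply/mapP => -[z _ az]; move: lt_ad; rewrite az ltnNge leq_addr.
Qed.

Lemma count_andr (X : Type) (a : pred X) (b : bool) s :
  count (fun x => a x && b) s = count a s * b.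
Proof.
case: b; first by rewrite muln1; apply: eq_count => x; rewrite andbT.
by rewrite muln0 (eq_count (a2 := pred0)) ?count_pred0 // => x; rewrite andbF.
Qed.

Lemma count_le1_nth (X : Type) (a : pred X) d s i j :
  count a s <= 1 -> i < size s -> j < size s ->
  a (nth d s i) -> a (nth d s j) -> i = j.
Proof.
have count_gt0 s' k : k < size s' -> a (nth d s' k) -> 0 < count a s'.
  by move=> ltk ak; rewrite -has_count; apply/(has_nthP d); exists k.
elim: s i j => //= y s IH [|i] [|j] //= cnt lti ltj ai aj.
- by have := count_gt0 _ _ ltj aj; move: cnt; rewrite ai; lia.
- by have := count_gt0 _ _ lti ai; move: cnt; rewrite aj; lia.
- by congr S; apply: IH => //; move: cnt; case: (a y) => /=; lia.
Qed.

(** A cuboid is a list of pairs (o, l), its s-th side being the integer interval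
    (o, o + l]; a tile lists its sides.  Tilings are exact covers, counted with
    multiplicity, so that they add up under disjoint unions. *)
Definition in_cuboid (C : seq (nat * nat)) (x : seq nat) : bool := all2 in_seg C x.

Definition in_tile (B : seq (seq nat)) (x : seq nat) : bool :=
  all2 (fun A a => a \in A) B x.

Section Tilings.
Variable F : nat -> nat.

Definition is_tile (C : seq (nat * nat)) (B : seq (seq nat)) : bool :=
  all2 (fun I A => uniq A && all (in_seg I) A) C B &&
  perm_eq (map size B) (map F (iota 1 (size C))).

Definition tiles C T : Prop :=
  all (is_tile C) T /\ forall x, count (in_tile^~ x) T = in_cuboid C x.

Definition tileable C : Prop := exists T, tiles C T.

Lemma tileable_single C :
  perm_eq (map snd C) (map F (iota 1 (size C))) -> tileable C.
Proof.
move=> sizeC; exists [:: map seg C]; split.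
  rewrite /= andbT /is_tile; apply/andP; split.
    elim: C {sizeC} => //= I C ->; rewrite andbT iota_uniq /=.
    by apply/allP => a; rewrite mem_seg.
  by rewrite -map_comp (eq_map (g := snd)) // => I; apply: size_iota.
move=> x /=; rewrite addn0; congr nat_of_bool.
by elim: C x {sizeC} => [|I C IH] [|a x] //=; rewrite mem_seg IH.
Qed.

Lemma tileable_nil C o : tileable (rcons C (o, 0)).
Proof.
exists [::]; split=> // x; case/lastP: x => [|y a].
  by rewrite /in_cuboid all2_rcons_nil.
by rewrite /in_cuboid all2_rcons /in_seg /=; lia.
Qed.

Lemma is_tile_widen C I J B :
  subpred (in_seg I) (in_seg J) -> is_tile (rcons C I) B -> is_tile (rcons C J) B.
Proof.
case/lastP: B => [|B A]; first by rewrite /is_tile all2_rcons_nil.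
rewrite /is_tile !all2_rcons !size_rcons => IJ /andP[/andP[-> /andP[-> AI]] ->].
by rewrite (sub_all IJ AI).
Qed.

Lemma tileable_cat C o l1 l2 :
  tileable (rcons C (o, l1)) -> tileable (rcons C (o + l1, l2)) ->
  tileable (rcons C (o, l1 + l2)).
Proof.
move=> [T1 [tileT1 coverT1]] [T2 [tileT2 coverT2]]; exists (T1 ++ T2); split.
  rewrite all_cat (sub_all _ tileT1) ?(sub_all _ tileT2) // => B;
    by apply: is_tile_widen => a; rewrite /in_seg /=; lia.
move=> x; rewrite count_cat coverT1 coverT2.
case/lastP: x => [|y a]; rewrite /in_cuboid ?all2_rcons_nil // !all2_rcons.
by rewrite /in_seg /=; lia.
Qed.

Lemma tileable_copies C o l c :
  (forall j, j < c -> tileable (rcons C (o + j * l, l))) ->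
  tileable (rcons C (o, c * l)).
Proof.
elim: c o => [|c IH] o tileC; first exact: tileable_nil.
rewrite mulSn; apply: tileable_cat.
  by have := tileC 0 (ltn0Sn c); rewrite mul0n addn0.
by apply: IH => j ltjc; rewrite -addnA -mulSn; apply: tileC.
Qed.

Lemma tileable_rcons C o : tileable C -> tileable (rcons C (o, F (size C).+1)).
Proof.
set A := seg (o, F (size C).+1).
move=> [T [tileT coverT]]; exists [seq rcons B A | B <- T]; split.
  rewrite all_map; apply: sub_all tileT => B /andP[CB sizeB]; apply/andP; split.
    by rewrite /= all2_rcons CB iota_uniq; apply/allP => a; rewrite mem_seg.
  rewrite size_rcons map_rcons size_iota -(addn1 (size C)) iotaD map_cat /= cats1.
  by rewrite add1n addn1 -!cats1 perm_cat2r.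
move=> x; rewrite count_map; case/lastP: x => [|y a].
  rewrite /in_cuboid all2_rcons_nil (eq_count (a2 := pred0)) ?count_pred0 // => B.
  exact: all2_rcons_nil.
rewrite (eq_count (a2 := fun B => in_tile B y && (a \in A))) => [|B]; last first.
  exact: all2_rcons.
by rewrite count_andr coverT /in_cuboid all2_rcons mem_seg; lia.
Qed.

Lemma tileable_rotate C I : tileable (I :: C) -> tileable (rcons C I).
Proof.
move=> [T [tileT coverT]]; exists (map (rot 1) T); split.
  rewrite all_map; apply: sub_all tileT => B /andP[CB sizeB]; apply/andP; split.
    by rewrite -rot1_cons all2_rot1.
  by rewrite map_rot size_rcons perm_rot.
move=> x; rewrite count_map -rot1_cons -(rotrK 1 x) /in_cuboid all2_rot1 -coverT.
by apply: eq_count => B; apply: all2_rot1.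
Qed.

Lemma tileable_shift C o l d : tileable ((o, l) :: C) -> tileable ((o + d, l) :: C).
Proof.
pose shift B := if B is A :: B' then map (addn d) A :: B' else B.
move=> [T [tileT coverT]]; exists (map shift T); split.
  rewrite all_map; apply: sub_all tileT => -[|A B] /andP[//].
  rewrite all2_cons => /andP[/andP[uA AI] CB] sizeB.
  rewrite /preim /= /is_tile all2_cons map_cons size_map sizeB CB.
  rewrite map_inj_uniq ?uA //=; last exact: addnI.
  rewrite !andbT all_map; apply: sub_all AI => a.
  by rewrite /preim /in_seg /=; lia.
have shiftE B x : B \in T -> in_tile (shift B) x =
    if x is a :: y then in_tile B ((a - d) :: y) && (d <= a) else false.
  case: B => [|A B] /(allP tileT) // _; case: x => [|a y] //.
  by rewrite /in_tile /= mem_map_addn -andbA andbC.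
move=> x; rewrite count_map; case: x => [|a y].
  by rewrite (eq_in_count (a2 := pred0)) ?count_pred0 // => B; apply: shiftE.
rewrite (eq_in_count (a2 := fun B => in_tile B ((a - d) :: y) && (d <= a))).
  by rewrite count_andr coverT /in_cuboid /= /in_seg /=; lia.
by move=> B; apply: shiftE.
Qed.

End Tilings.

Lemma Ffact0 F : Ffact F 0 = 1.
Proof. by rewrite /Ffact big_geq. Qed.

Lemma FfactS F n : Ffact F n.+1 = Ffact F n * F n.+1.
Proof. by rewrite /Ffact big_nat_recr. Qed.

Definition Fbox (F : nat -> nat) m n : seq (nat * nat) :=
  [seq (0, F i) | i <- iota (n - m + 1) m].

Section Tlambda.
Variables (F : nat -> nat) (lK lM : nat -> nat -> nat).
Hypothesis F_rec :
  forall k m, 0 < k -> 0 < m -> F (k + m) = lK k m * F k + lM k m * F m.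

Lemma tileable_Fbox m n : m <= n -> tileable F (Fbox F m n).
Proof.
elim: n m => [|n IH] [|m] le_mn //; try exact: tileable_single.
have [->|ne_mn] := eqVneq m n.
  by apply: tileable_single; rewrite size_map size_iota -map_comp subnn.
have lt_mn : m < n by rewrite ltn_neqAle ne_mn.
set k := n - m.
have Fbox_rcons : Fbox F m.+1 n.+1 = rcons (Fbox F m n) (0, F n.+1).
  rewrite /Fbox -(addn1 m) iotaD map_cat cats1.
  by congr (rcons (map _ (iota _ _)) (0, F _)); lia.
have Fbox_cons : Fbox F m.+1 n = (0, F k) :: Fbox F m n.
  by rewrite /Fbox /=; congr ((0, F _) :: map _ (iota _ _)); rewrite /k; lia.
have Fn : F n.+1 = lM k m.+1 * F m.+1 + lK k m.+1 * F k.
  by rewrite addnC -F_rec; [congr F | ..]; rewrite /k; lia.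
rewrite Fbox_rcons Fn; apply: tileable_cat; apply: tileable_copies => j _.
  have := tileable_rcons (0 + j * F m.+1) (IH m (ltnW lt_mn)).
  by rewrite size_map size_iota.
apply: tileable_rotate; rewrite -[X in (X, _)]add0n; apply: tileable_shift.
by rewrite -Fbox_cons; apply: IH.
Qed.

Lemma Tlambda_admissible : admissible F.
Proof.
elim=> [|n IH] m le_mn.
  by move: le_mn; rewrite leqn0 => /eqP ->; rewrite Ffact0.
case: m le_mn => [|m] le_mn; first by rewrite Ffact0 mul1n subn0.
have [->|ne_mn] := eqVneq m n; first by rewrite subnn Ffact0 muln1.
have lt_mn : m < n by rewrite ltn_neqAle ne_mn.
rewrite subSS [Ffact F n.+1]FfactS; set k := n - m.
have -> : F n.+1 = lK k m.+1 * F k + lM k m.+1 * F m.+1.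
  by rewrite -F_rec; [congr F | ..]; rewrite /k; lia.
rewrite mulnDr; apply: dvdn_add.
  have kE : k = (n - m.+1).+1 by rewrite /k; lia.
  have FkE : Ffact F k = Ffact F (n - m.+1) * F k by rewrite kE FfactS.
  by rewrite FkE !mulnA; apply: dvdn_mul => //; apply: dvdn_mulr; apply: IH.
rewrite FfactS mulnAC mulnA; apply: dvdn_mul => //.
by apply: dvdn_mulr; apply: IH; apply: ltnW.
Qed.

End Tlambda.

Section FboxTiling.
Variables (F : nat -> nat) (m n : nat).

Definition point (x : 'I_m -> nat) : seq nat := [seq x i | i <- enum 'I_m].

Definition box_of (B : seq (seq nat)) : box m := [ffun s : 'I_m => nth [::] B s].

Lemma nth_point x0 x (i : 'I_m) : nth x0 (point x) i = x i.
Proof. by rewrite /point (nth_map i) ?size_enum_ord // nth_ord_enum. Qed.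

Lemma all2_pointP (S : Type) (r : S -> nat -> bool) d s x :
  size s = m -> reflect (forall i : 'I_m, r (nth d s i) (x i)) (all2 r s (point x)).
Proof.
move=> sz_s; apply: (iffP (all2_nthP _ d 0 _ _)) => [[_ rs] i|rs].
  by rewrite -(nth_point 0 x); apply: rs; rewrite sz_s.
split=> [|i]; first by rewrite size_map size_enum_ord.
by rewrite sz_s => lt_im; have := rs (Ordinal lt_im); rewrite -(nth_point 0 x).
Qed.

Lemma in_boxP B x : size B = m -> reflect (in_box (box_of B) x) (in_tile B (point x)).
Proof.
move=> sz_B; apply: (iffP (all2_pointP _ [::] _ sz_B)) => inB i; have := inB i;
  by rewrite ffunE.
Qed.

Lemma nth_Fbox (i : 'I_m) : nth (0, 0) (Fbox F m n) i = (0, F (n - m + 1 + i)).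
Proof. by rewrite (nth_map 0) ?nth_iota ?size_iota. Qed.

Lemma in_VP x : reflect (in_V F m n x) (in_cuboid (Fbox F m n) (point x)).
Proof.
have sz_V : size (Fbox F m n) = m by rewrite size_map size_iota.
apply: (iffP (all2_pointP _ (0, 0) _ sz_V)) => inV i; have := inV i;
  by rewrite nth_Fbox.
Qed.

Lemma subbox_of_tile B : is_tile F (Fbox F m n) B -> is_subbox F m n (box_of B).
Proof.
case/andP=> FB sizeB.
have sz_B : size B = m by rewrite -(all2_size FB) size_map size_iota.
have /tuple_permP[p sizeBE] : perm_eq (map size B) [tuple F i.+1 | i < m].
  have enumE : [seq F (nat_of_ord i).+1 | i <- enum 'I_m] = map F (iota 1 m).
    by rewrite (iotaDl 1 0) -val_enum_ord -!map_comp.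
  by apply: perm_trans sizeB _; rewrite size_map size_iota -enumE.
exists p => s; rewrite ffunE.
have /andP[uniq_Bs Bs_V] :
    uniq (nth [::] B s) && all (in_seg (0, F (n - m + 1 + s))) (nth [::] B s).
  move/(all2_nthP _ (0, 0) [::]): FB => [_ FB]; rewrite -nth_Fbox.
  by apply: FB; rewrite size_map size_iota.
split=> //; have := congr1 (nth 0 ^~ s) sizeBE.
rewrite /= (nth_map [::]) ?sz_B // => ->.
by rewrite (nth_map s) ?size_enum_ord // nth_ord_enum !tnth_mktuple.
Qed.

Lemma tiling_of_tiles T : tiles F (Fbox F m n) T -> has_tiling F m n.
Proof.
move=> [/allP tileT coverT].
have sz_T B : B \in T -> size B = m.
  by move=> /tileT /andP[/all2_size <- _]; rewrite size_map size_iota.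
exists (map box_of T); split.
- by move=> _ /mapP[B /tileT tileB ->]; apply: subbox_of_tile.
- move=> i j; rewrite size_map => ltiT ltjT ne_ij x.
  rewrite !(nth_map [::]) // => -[/in_boxP inBi /in_boxP inBj].
  move/eqP: ne_ij; apply; apply: (@count_le1_nth _ (in_tile^~ (point x)) [::] T) => //.
  - by rewrite coverT leq_b1.
  - by apply: inBi; apply/sz_T/mem_nth.
  - by apply: inBj; apply/sz_T/mem_nth.
move=> x; split=> [/in_VP|[_ /mapP[B BT ->] /(in_boxP _ (sz_T B BT)) inB]].
  rewrite -[in_cuboid _ _]lt0b -coverT -has_count => /hasP[B BT inB].
  by exists (box_of B); [apply: map_f | apply/in_boxP => //; apply: sz_T].
by apply/in_VP; rewrite -[in_cuboid _ _]lt0b -coverT -has_count; apply/hasP; exists B.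
Qed.

End FboxTiling.

Lemma Tlambda_cobweb F : in_Tlambda F -> cobweb_tiling F.
Proof.
move=> [_ [lK [lM F_rec]]]; split; first exact: Tlambda_admissible F_rec.
move=> m n _ le_mn; have [T tilesT] := tileable_Fbox F_rec le_mn.
exact: tiling_of_tiles tilesT.
Qed.

Lemma Tab_coefD a b c k m :
  Tab_coef a b c (k + m) = b ^ m * Tab_coef a b c k + a ^ k * Tab_coef a b c m.
Proof.
rewrite /Tab_coef big_split_ord /= mulnDr mulnCA [a ^ k * _]mulnCA !big_distrr /=.
congr (_ + _); apply: eq_bigr => i _; congr (c * _).
  by rewrite mulnCA -expnD; congr (_ * _ ^ _); have := ltn_ord i; lia.
by rewrite expnD -mulnA; congr (_ * (_ * _ ^ _)); have := ltn_ord i; lia.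
Qed.

Lemma Tab_Tlambda F : in_Tab F -> nat_valued F -> in_Tlambda F.
Proof.
move=> [a [b [c [_ FE]]]] F_gt0; split=> //.
exists (fun _ m => b ^ m), (fun k _ => a ^ k) => k m k_gt0 m_gt0.
by rewrite !FE ?addn_gt0 ?k_gt0 // Tab_coefD.
Qed.

Lemma fibSS n : fib n.+2 = fib n.+1 + fib n.
Proof. by []. Qed.

Lemma fibD k m : fib (k.+1 + m) = fib k.+1 * fib m.+1 + fib k * fib m.
Proof.
elim: k m => [|k IH] m; first by rewrite add1n /=; lia.
by rewrite addSnnS IH !fibSS; nia.
Qed.

Lemma fib_gt0 n : 0 < n -> 0 < fib n.
Proof. by elim: n => [|[|n] IH] // _; rewrite /= ltn_addr ?IH. Qed.

Lemma fib_Tlambda : in_Tlambda fib.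
Proof.
split=> [n|]; first exact: fib_gt0.
exists (fun _ m => fib m.+1), (fun k _ => fib k.-1) => -[//|k] m _ _.
by rewrite fibD mulnC.
Qed.

Lemma fib_notin_Tab : ~ in_Tab fib.
Proof.
move=> [a [b [c [_ FE]]]].
have := FE 3 erefl; have := FE 2 erefl; have := FE 1 erefl.
rewrite /Tab_coef !big_ord_recr !big_ord0 /= !subSS !subn0.
rewrite ?expn0 ?expn1 ?add0n ?mul1n ?muln1.
by move=> <-; rewrite !mul1n; nia.
Qed.

Theorem corollary6 :
  (forall F : nat -> nat, in_Tab F -> nat_valued F ->
     in_Tlambda F /\ cobweb_tiling F)
  /\ in_Tlambda fib /\ ~ in_Tab fib.
Proof.
split; last by split; [exact: fib_Tlambda | exact: fib_notin_Tab].
move=> F TabF F_gt0; have TlF := Tab_Tlambda TabF F_gt0.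
by split; last exact: Tlambda_cobweb.
Qed.
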